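(* Let the problem data, partition, residuals, augmented Lagrangian and primal updates be as described in the context, and let $\{\mu^{c,k}_i\}_{k\ge 0}$, $c\in\mathcal{C}$, $i=1,\dots,N$, be arbitrary dual sequences with $\mu^{F,k}_i\ge 0$ componentwise for all $k$. Let the primal sequences $\{X^k_i, Z^k, Y^{c,k}_i\}$ be generated by the updates (U1)–(U3) from arbitrary initial values $X^0_i\in[-u,u]$, $Z^0\in[-u,u]$, $Y^{c,0}_i\in[0,u^c_{Y_i}]$. Then for every $k\ge 0$, $$ L^k\;\ge\; L^{k+1}+D^k+P^k+\sum_{i=1}^N\sum_{l=1}^M\Big({}^{1}\sigma^k_{i,l}\,\|X^k_{i,l}-X^{k+1}_{i,l}\|_1+U^k_{i,l}\Big), $$ where $$ L^k:=\sum_{i=1}^N L_i\big(X^k_i,Z^k,(Y^{c,k}_i)_c,(\mu^{c,k}_i)_c\big),\qquad D^k:=\sum_{i=1}^N\sum_{c\in\mathcal C}\big\langle \mu^{c,k}_i-\mu^{c,k+1}_i,\ r^{c,k+1}_i\big\rangle, $$ with $r^{c,k+1}_i:=r^c_i(X^{k+1}_i,Z^{k+1},Y^{c,k+1}_i)$; $$ P^k:=\sum_{i=1}^N\Big[\sum_{l}{}^{2}\sigma^k_{i,l}\|X^{k+1}_{i,l}-X^k_{i,l}\|^2+\rho_i\|X^{k+1}_i-X^k_i\|^2+(\tau^k+\rho_i)\|Z^{k+1}-Z^k\|^2+\sum_{c\in\mathcal C}\Big(\gamma^{c,k}_i+\tfrac{\rho_i}{2}\Big)\|Y^{c,k+1}_i-Y^{c,k}_i\|^2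 $$ $$ \qquad+\tfrac{\rho_i}{2}\sum_{l}\Big(\|F_i(X^{k+1,k+1}_{i,l})-F_i(X^{k+1,k}_{i,l})\|^2+\|G_{i,l}(X^{k+1}_{i,l}-X^k_{i,l})\|^2+2\|H_{i,l}(X^{k+1}_{i,l}-X^k_{i,l})\|^2\Big)\Big]; $$ and $$ U^k_{i,l}:=\Big\langle \mu^{F,k}_i+\rho_i\big(F_i(X^{k+1,k+1}_{i,l})+Y^{F,k}_i\big),\ F_i(X^{k+1,k}_{i,l})-F_i(X^{k+1,k+1}_{i,l})-\big(\nabla_{X_{i,l}}F_i(X^{k+1,k+1}_{i,l})\big)^{\!T}\!\!\cdot(X^k_{i,l}-X^{k+1}_{i,l})\Big\rangle, $$ where the last product denotes the vector whose $j$-th entry is $(X^k_{i,l}-X^{k+1}_{i,l})^T\nabla_{X_{i,l}}(F_i)_j(X^{k+1,k+1}_{i,l})$.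
   Context: Problem data. $n,N,M\in\mathbb N$. $u\in\mathbb R^n$ with $u>0$. $f(Z)=\langle f_0,Z\rangle$ is linear on $\mathbb R^n$. For each $i=1,\dots,N$: $F_i:\mathbb R^n\to\mathbb R^{p_i}$ has convex quadratic components (each component of the form $a(Z)+c(Z)^2$ or $c(Z)^2-a(Z)b(Z)$ with $a,b,c$ affine, convex on $[-u,u]$); $G_i:\mathbb R^n\to\mathbb R^{q_i}$ and $H_i:\mathbb R^n\to\mathbb R^{s_i}$ are affine. Vectors in $\mathbb R^n$ are partitioned into $M$ disjoint subvectors $Z=(Z_1,\dots,Z_M)$, $Z_l\in\mathbb R^{m_l}$, $\sum_l m_l=n$, the same partition for every $X_i\in\mathbb R^n$; correspondingly $u=(u_1,\dots,u_M)$, $f(Z)=\sum_l\langle f_l,Z_l\rangle$, $G_i(Z)=\sum_l G_{i,l}Z_l+G_{i,0}$, $H_i(Z)=\sum_l H_{i,l}Z_l+H_{i,0}$ with matrices $G_{i,l},H_{i,l}$. Slack variables and residuals. Let $\mathcal C=\{pX,nX,F,G,pH,nH\}$. For each $i$ there are slack vectors $Y^{pX}_i,Y^{nX}_i\in\mathbb R^n$, $Y^F_i\in\mathbb R^{p_i}$, $Y^G_i\in\mathbb R^{q_i}$, $Y^{pH}_i,Y^{nH}_i\in\mathbb R^{s_i}$, with given positive upper bound vectors $u^c_{Y_i}$ (slack boxes $[0,u^c_{Y_i}]$), and dual vectors $\mu^c_i$ of the same sizes. Residuals: $r^{pX}_i=X_i-Z+Y^{pX}_i$, $r^{nX}_i=Z-X_i+Y^{nX}_i$,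 $r^F_i=F_i(X_i)+Y^F_i$, $r^G_i=G_i(X_i)+Y^G_i$, $r^{pH}_i=H_i(X_i)+Y^{pH}_i$, $r^{nH}_i=-H_i(X_i)+Y^{nH}_i$. With $\rho_i>0$, the augmented Lagrangian of block $i$ is $$L_i=f(X_i)+\sum_{c\in\mathcal C}\langle\mu^c_i,r^c_i\rangle+\frac{\rho_i}{2}\sum_{c\in\mathcal C}\|r^c_i\|^2.$$ Gauss–Seidel notation: $X^{k+1,k}_{i,l}:=(X^{k+1}_{i,1},\dots,X^{k+1}_{i,l-1},X^k_{i,l},X^k_{i,l+1},\dots,X^k_{i,M})$ and $X^{k+1,k+1}_{i,l}:=(X^{k+1}_{i,1},\dots,X^{k+1}_{i,l},X^k_{i,l+1},\dots,X^k_{i,M})$. Parameters: ${}^{1}\sigma^k_{i,l}\ge0$, ${}^{2}\sigma^k_{i,l}>0$, $\tau^k>0$, $\gamma^{c,k}_i>0$. Updates at iteration $k$ (for each $i$): (U1) For $l=1,\dots,M$ in order, $X^{k+1}_{i,l}$ is the minimizer over $X_{i,l}\in[-u_l,u_l]$ of $L_i\big((X^{k+1}_{i,1},\dots,X^{k+1}_{i,l-1},X_{i,l},X^k_{i,l+1},\dots,X^k_{i,M}),Z^k,(Y^{c,k}_i)_c,(\mu^{c,k}_i)_c\big)+{}^{1}\sigma^k_{i,l}\|X_{i,l}-X^k_{i,l}\|_1+\tfrac{{}^{2}\sigma^k_{i,l}}{2}\|X_{i,l}-X^k_{i,l}\|^2$. (U2) $Z^{k+1}$ is the minimizer over $Z\in[-u,u]$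 of $\sum_{i=1}^N\Big(\langle\mu^{pX,k}_i,X^{k+1}_i-Z+Y^{pX,k}_i\rangle+\langle\mu^{nX,k}_i,Z-X^{k+1}_i+Y^{nX,k}_i\rangle+\tfrac{\rho_i}{2}\big(\|X^{k+1}_i-Z+Y^{pX,k}_i\|^2+\|Z-X^{k+1}_i+Y^{nX,k}_i\|^2\big)+\tfrac{\tau^k}{2}\|Z-Z^k\|^2\Big)$. (U3) For each $c\in\mathcal C$, $Y^{c,k+1}_i$ is the minimizer over $Y\in[0,u^c_{Y_i}]$ of $\langle\mu^{c,k}_i,r^c_i(X^{k+1}_i,Z^{k+1},Y)\rangle+\tfrac{\rho_i}{2}\|r^c_i(X^{k+1}_i,Z^{k+1},Y)\|^2+\tfrac{\gamma^{c,k}_i}{2}\|Y-Y^{c,k}_i\|^2$, where $r^c_i(X_i,Z,Y)$ denotes the residual $r^c_i$ with $Y^c_i=Y$. *)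

From HB Require Import structures.
From mathcomp Require Import all_boot all_order all_algebra.
From mathcomp Require Import all_classical all_reals all_analysis.
Set Implicit Arguments.
Unset Strict Implicit.
Unset Printing Implicit Defensive.
Import Order.TTheory GRing.Theory Num.Theory.
Import numFieldNormedType.Exports.
Local Open Scope ring_scope.

Section Defs.
Variable R : realType.

Definition dotv m (a b : 'rV[R]_m) : R := \sum_(j < m) a ord0 j * b ord0 j.
Definition sqn m (a : 'rV[R]_m) : R := dotv a a.

Definition inbox m (u X : 'rV[R]_m) : Prop :=
  forall j, - u ord0 j <= X ord0 j <= u ord0 j.
Definition inslackbox m (w Y : 'rV[R]_m) : Prop :=
  forall j, 0 <= Y ord0 j <= w ord0 j.

Definition affine_fun n (a : 'rV[R]_n -> R) : Prop :=
  exists (w : 'rV[R]_n) (b : R), forall X, a X = dotv w X + b.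

Definition convex_on_box n (u : 'rV[R]_n) (g : 'rV[R]_n -> R) : Prop :=
  forall X Y (t : R), inbox u X -> inbox u Y -> 0 <= t <= 1 ->
    g (t *: X + (1 - t) *: Y) <= t * g X + (1 - t) * g Y.

Definition quad_comp n (u : 'rV[R]_n) (g : 'rV[R]_n -> R) : Prop :=
  (exists a b c : 'rV[R]_n -> R, [/\ affine_fun a, affine_fun b, affine_fun c &
     (forall X, g X = a X + c X ^+ 2) \/ (forall X, g X = c X ^+ 2 - a X * b X)])
  /\ convex_on_box u g.

(* Problem data: f(Z) = <f0,Z>, F_i, G_i(Z) = Z *m GM_i + G0_i,
   H_i(Z) = Z *m HM_i + H0_i (row-vector convention). *)
Record problem (n N : nat) := Problem {
  f0 : 'rV[R]_n;
  pdim : 'I_N -> nat;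
  qdim : 'I_N -> nat;
  sdim : 'I_N -> nat;
  Ff : forall i, 'rV[R]_n -> 'rV[R]_(pdim i);
  GM : forall i, 'M[R]_(n, qdim i);
  G0 : forall i, 'rV[R]_(qdim i);
  HM : forall i, 'M[R]_(n, sdim i);
  H0 : forall i, 'rV[R]_(sdim i) }.

Definition F_admissible n N (P : problem n N) (u : 'rV[R]_n) : Prop :=
  forall i (j : 'I_(pdim P i)), quad_comp u (fun X => Ff P i X ord0 j).

End Defs.

Inductive cls := cpX | cnX | cF | cG | cpH | cnH.
Definition clist : seq cls := [:: cpX; cnX; cF; cG; cpH; cnH].

Section Alg.
Variables (R : realType) (n N M : nat) (P : problem R n N).

Definition cdim (i : 'I_N) (c : cls) : nat :=
  match c with
  | cpX | cnX => n
  | cF => pdim P i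
  | cG => qdim P i
  | cpH | cnH => sdim P i
  end.

(* families indexed by classes: slacks Y_i^c, duals mu_i^c, bounds u^c_{Y_i} *)
Definition cfam (i : 'I_N) := forall c : cls, 'rV[R]_(cdim i c).

Definition resid (i : 'I_N) (X Z : 'rV[R]_n) (c : cls) :
  'rV[R]_(cdim i c) -> 'rV[R]_(cdim i c) :=
  match c as c0 return 'rV[R]_(cdim i c0) -> 'rV[R]_(cdim i c0) with
  | cpX => fun y => X - Z + y
  | cnX => fun y => Z - X + y
  | cF => fun y => Ff P i X + y
  | cG => fun y => X *m GM P i + G0 P i + y
  | cpH => fun y => X *m HM P i + H0 P i + y
  | cnH => fun y => - (X *m HM P i + H0 P i) + y
  end.

Definition Lag (rho : 'I_N -> R) (i : 'I_N) (X Z : 'rV[R]_n) (Y mu : cfam i) : R :=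
  dotv (f0 P) X
  + \sum_(c <- clist) dotv (mu c) (@resid i X Z c (Y c))
  + rho i / 2 * \sum_(c <- clist) sqn (@resid i X Z c (Y c)).

Variable blk : 'I_n -> 'I_M.

(* block l of a vector, padded by zeros in the other coordinates
   (so that G_{i,l} Z_l = blockv l Z *m GM_i, etc.) *)
Definition blockv (l : 'I_M) (X : 'rV[R]_n) : 'rV[R]_n :=
  \row_j (if blk j == l then X ord0 j else 0).

Definition l1blk (l : 'I_M) (X : 'rV[R]_n) : R :=
  \sum_(j < n | blk j == l) `|X ord0 j|.

(* Gauss-Seidel points X^{k+1,k}_{i,l} (gsS) and X^{k+1,k+1}_{i,l} (gsI) *)
Definition gsS (Xn Xo : 'rV[R]_n) (l : 'I_M) : 'rV[R]_n :=
  \row_j (if (blk j < l)%N then Xn ord0 j else Xo ord0 j).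
Definition gsI (Xn Xo : 'rV[R]_n) (l : 'I_M) : 'rV[R]_n :=
  \row_j (if (blk j <= l)%N then Xn ord0 j else Xo ord0 j).

Definition repl (l : 'I_M) (X W : 'rV[R]_n) : 'rV[R]_n :=
  \row_j (if blk j == l then W ord0 j else X ord0 j).

Definition inbox_blk (u : 'rV[R]_n) (l : 'I_M) (W : 'rV[R]_n) : Prop :=
  forall j, blk j == l -> - u ord0 j <= W ord0 j <= u ord0 j.

Variables (rho : 'I_N -> R)
  (X : nat -> 'I_N -> 'rV[R]_n) (Z : nat -> 'rV[R]_n)
  (Y : nat -> forall i : 'I_N, cfam i) (mu : nat -> forall i : 'I_N, cfam i)
  (sigma1 sigma2 : nat -> 'I_N -> 'I_M -> R) (tau : nat -> R)
  (gamma : nat -> 'I_N -> cls -> R).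

(* objective of the block update (U1); only block l of W matters *)
Definition objX (k : nat) (i : 'I_N) (l : 'I_M) (W : 'rV[R]_n) : R :=
  @Lag rho i (repl l (gsS (X k.+1 i) (X k i) l) W) (Z k) (Y k i) (mu k i)
  + sigma1 k i l * l1blk l (W - X k i)
  + sigma2 k i l / 2 * sqn (blockv l (W - X k i)).

Definition objZ (k : nat) (W : 'rV[R]_n) : R :=
  \sum_(i < N)
    (dotv (mu k i cpX) (X k.+1 i - W + Y k i cpX)
     + dotv (mu k i cnX) (W - X k.+1 i + Y k i cnX)
     + rho i / 2 * (sqn (X k.+1 i - W + Y k i cpX)
                    + sqn (W - X k.+1 i + Y k i cnX))
     + tau k / 2 * sqn (W - Z k)).

Definition objY (k : nat) (i : 'I_N) (c : cls) (y : 'rV[R]_(cdim i c)) : R :=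
  dotv (mu k i c) (@resid i (X k.+1 i) (Z k.+1) c y)
  + rho i / 2 * sqn (@resid i (X k.+1 i) (Z k.+1) c y)
  + gamma k i c / 2 * sqn (y - Y k i c).

Definition Ltot (k : nat) : R :=
  \sum_(i < N) @Lag rho i (X k i) (Z k) (Y k i) (mu k i).

Definition Dk (k : nat) : R :=
  \sum_(i < N) \sum_(c <- clist)
     dotv (mu k i c - mu k.+1 i c) (@resid i (X k.+1 i) (Z k.+1) c (Y k.+1 i c)).

Definition Pk (k : nat) : R :=
  \sum_(i < N)
   ( \sum_(l < M) sigma2 k i l * sqn (blockv l (X k.+1 i - X k i))
   + rho i * sqn (X k.+1 i - X k i)
   + (tau k + rho i) * sqn (Z k.+1 - Z k)
   + \sum_(c <- clist) (gamma k i c + rho i / 2) * sqn (Y k.+1 i c - Y k i c)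
   + rho i / 2 * \sum_(l < M)
       ( sqn (Ff P i (gsI (X k.+1 i) (X k i) l) - Ff P i (gsS (X k.+1 i) (X k i) l))
       + sqn (blockv l (X k.+1 i - X k i) *m GM P i)
       + 2 * sqn (blockv l (X k.+1 i - X k i) *m HM P i))).

(* U^k_{i,l}; the term (grad_{X_{i,l}} F_i(x))^T (X^k_{i,l} - X^{k+1}_{i,l})
   is the differential 'd (F_i) x applied to the block-l vector
   X^k_{i,l} - X^{k+1}_{i,l} padded by zeros. *)
Definition Uk (k : nat) (i : 'I_N) (l : 'I_M) : R :=
  let xI := gsI (X k.+1 i) (X k i) l in
  let xS := gsS (X k.+1 i) (X k i) l in
  dotv (mu k i cF + rho i *: (Ff P i xI + Y k i cF))
       (Ff P i xS - Ff P i xI - 'd (Ff P i) xI (blockv l (X k i - X k.+1 i))).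

End Alg.

Arguments objY {R n N P} rho X Z Y mu gamma k i c y.
Arguments resid {R n N} P i X Z c _.
Arguments Lag {R n N} P rho i X Z Y mu.

(* Each primal update minimises, over a box, a function whose smooth part is a
   polynomial along the segment from the new iterate back to the old one: the
   residuals are affine except [F_i], whose components are quadratic, so every
   residual moves as [r + t p + t^2 q] and the augmented-Lagrangian terms are
   quartic in [t].  Minimality on the convex box forces a nonnegative slope at
   [t = 0]; the proximal terms contribute [-sigma1 |.|_1 - sigma2 |.|^2]
   (resp. [-tau], [-gamma] times the squared step) to that slope, which bounds
   the first-order change of [L_i] from below.  The exact expansion of [L_i]
   between the two iterates then produces the squared increments of [P^k] and,
   for [F_i], the Taylor remainder [U^k].  Telescoping over the Gauss-Seidel
   blocks and chaining the [X]-, [Z]-, [Y]- and multiplier steps concludes. *)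

From HB Require Import structures.
From mathcomp Require Import all_boot all_order all_algebra.
From mathcomp Require Import all_classical all_reals all_analysis.
From mathcomp Require Import ring lra.
Import Order.TTheory GRing.Theory Num.Theory.
Import numFieldNormedType.Exports.
Local Open Scope ring_scope.

Set Implicit Arguments.
Unset Strict Implicit.
Unset Printing Implicit Defensive.

Section InnerProduct.
Variables (R : realType) (m : nat).
Implicit Types (a b c : 'rV[R]_m) (t : R).

Lemma dotvC a b : dotv a b = dotv b a.
Proof. by apply: eq_bigr => j _; rewrite mulrC. Qed.

Lemma dotvDl a b c : dotv (a + b) c = dotv a c + dotv b c.
Proof. by rewrite /dotv -big_split; apply: eq_bigr => j _; rewrite mxE mulrDl. Qed.

Lemma dotvDr a b c : dotv a (b + c) = dotv a b + dotv a c.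
Proof. by rewrite !(dotvC a) dotvDl. Qed.

Lemma dotvZl t a b : dotv (t *: a) b = t * dotv a b.
Proof. by rewrite /dotv mulr_sumr; apply: eq_bigr => j _; rewrite mxE mulrA. Qed.

Lemma dotvZr t a b : dotv a (t *: b) = t * dotv a b.
Proof. by rewrite !(dotvC a) dotvZl. Qed.

Lemma dotvNr a b : dotv a (- b) = - dotv a b.
Proof. by rewrite -scaleN1r dotvZr mulN1r. Qed.

Lemma dotvBr a b c : dotv a (b - c) = dotv a b - dotv a c.
Proof. by rewrite dotvDr dotvNr. Qed.

Lemma dotvBl a b c : dotv (a - b) c = dotv a c - dotv b c.
Proof. by rewrite !(dotvC _ c) dotvBr. Qed.

Lemma dotv0r a : dotv a 0 = 0.
Proof. by rewrite -(scale0r 0) dotvZr mul0r. Qed.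

Lemma sqnD a b : sqn (a + b) = sqn a + 2 * dotv a b + sqn b.
Proof. by rewrite /sqn !dotvDl !dotvDr (dotvC b a); ring. Qed.

Lemma sqnZ t a : sqn (t *: a) = t ^+ 2 * sqn a.
Proof. by rewrite /sqn dotvZl dotvZr mulrA -expr2. Qed.

Lemma sqnN a : sqn (- a) = sqn a.
Proof. by rewrite -scaleN1r sqnZ sqrrN expr1n mul1r. Qed.

Lemma sqnB a b : sqn (a - b) = sqn (b - a).
Proof. by rewrite -sqnN opprB. Qed.

End InnerProduct.

Section UpperSlope.
Variable R : realType.
Implicit Types (g h : R -> R) (a b c e : R).

Definition upper_slope g a :=
  exists K, forall t, 0 <= t <= 1 -> g t <= g 0 + t * a + t ^+ 2 * K.

Lemma upper_slope_min_ge0 g a : upper_slope g a ->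
  (forall t, 0 < t <= 1 -> g 0 <= g t) -> 0 <= a.
Proof.
case=> K hK gmin; rewrite leNgt; apply/negP => a_lt0.
have K_ge0 := normr_ge0 K.
pose t := - a / (`|K| - a).
have den_gt0 : 0 < `|K| - a by lra.
have t_gt0 : 0 < t by rewrite divr_gt0 // oppr_gt0.
have t_le1 : t <= 1 by rewrite ler_pdivrMr // mul1r; lra.
have slope_lt0 : a + t * `|K| < 0.
  have -> : a + t * `|K| = - a ^+ 2 / (`|K| - a).
    by rewrite /t; field; exact: lt0r_neq0.
  by rewrite mulNr oppr_lt0 divr_gt0 // exprn_even_gt0 //= lt_eqF.
have t01 : 0 <= t <= 1 by rewrite (ltW t_gt0) t_le1.
have := le_trans (gmin t _) (hK t t01); rewrite t_gt0 t_le1 => /(_ isT).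
have : t ^+ 2 * K <= t ^+ 2 * `|K| by rewrite ler_wpM2l ?sqr_ge0 ?ler_norm.
rewrite expr2; nra.
Qed.

Lemma upper_slope_poly g a b c e :
  (forall t, g t = g 0 + t * a + t ^+ 2 * (b + t * c + t ^+ 2 * e)) ->
  upper_slope g a.
Proof.
move=> gE; exists (`|b| + `|c| + `|e|) => t /andP[t_ge0 t_le1]; rewrite {1}gE lerD2l.
have t2_ge0 : 0 <= t ^+ 2 := sqr_ge0 t.
have t2_le1 : t ^+ 2 <= 1 by rewrite expr_le1.
apply: ler_wpM2l => //.
have tc : t * c <= `|c|.
  by rewrite (le_trans (ler_norm _)) // normrM ger0_norm // ler_piMl.
have te : t ^+ 2 * e <= `|e|.
  by rewrite (le_trans (ler_norm _)) // normrM ger0_norm // ler_piMl.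
have := ler_norm b; lra.
Qed.

Lemma upper_slopeD g h a b :
  upper_slope g a -> upper_slope h b -> upper_slope (g \+ h) (a + b).
Proof.
move=> [K gK] [L hL]; exists (K + L) => t t01 /=.
have := gK t t01; have := hL t t01; lra.
Qed.

Lemma upper_slope_sum (I : Type) (s : seq I) (g : I -> R -> R) (a : I -> R) :
  (forall i, upper_slope (g i) (a i)) ->
  upper_slope (fun t => \sum_(i <- s) g i t) (\sum_(i <- s) a i).
Proof.
move=> ga; elim: s => [|i s IH].
  by exists 0 => t _; rewrite !big_nil; lra.
rewrite big_cons.
have -> : (fun t => \sum_(j <- i :: s) g j t) = g i \+ (fun t => \sum_(j <- s) g j t).
  by apply/funext => t; rewrite big_cons.
exact: upper_slopeD.
Qed.

Lemma segment_in_interval (lo hi a b t : R) :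
  lo <= a <= hi -> lo <= b <= hi -> 0 <= t <= 1 -> lo <= a + t * (b - a) <= hi.
Proof. by move=> /andP[] ? ? /andP[] ? ? /andP[] ? ?; apply/andP; split; nra. Qed.

End UpperSlope.

Section AugTerm.
Variables (R : realType) (m : nat) (rho : R).
Implicit Types (w r p q v : 'rV[R]_m).

Definition augterm w r := dotv w r + rho / 2 * sqn r.

Lemma augtermD w r v :
  augterm w (r + v) = augterm w r + dotv (w + rho *: r) v + rho / 2 * sqn v.
Proof. by rewrite /augterm sqnD dotvDr dotvDl dotvZl; field. Qed.

Lemma augterm_upper_slope w r p q :
  upper_slope (fun t => augterm w (r + t *: p + t ^+ 2 *: q)) (dotv (w + rho *: r) p).
Proof.
apply: (@upper_slope_poly _ _ _ (dotv (w + rho *: r) q + rho / 2 * sqn p)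
  (rho * dotv p q) (rho / 2 * sqn q)) => t.
rewrite expr0n /= !scale0r !addr0 -addrA augtermD sqnD !sqnZ !dotvDr !dotvZr.
by rewrite dotvZl; field.
Qed.

Lemma augterm_line_upper_slope w r p :
  upper_slope (fun t => augterm w (r + t *: p)) (dotv (w + rho *: r) p).
Proof.
have := augterm_upper_slope w r p 0.
by congr upper_slope; apply/funext => t; rewrite scaler0 addr0.
Qed.

End AugTerm.

Section ProximalStep.
Variables (R : realType) (m : nat).

Lemma prox_first_order (S : 'rV[R]_m -> Prop) (f : 'rV[R]_m -> R) (c a : R) y0 y1 :
  upper_slope (fun t => f (y0 + t *: (y1 - y0))) a ->
  (forall t, 0 < t <= 1 -> S (y0 + t *: (y1 - y0))) ->
  (forall y, S y -> f y0 + c / 2 * sqn (y0 - y1) <= f y + c / 2 * sqn (y - y1)) ->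
  c * sqn (y1 - y0) <= a.
Proof.
move=> f_slope S_segment y0_min.
pose h t := c / 2 * sqn (y0 + t *: (y1 - y0) - y1).
have h_slope : upper_slope h (- (c * sqn (y1 - y0))).
  have hE t : h t = c / 2 * ((1 - t) ^+ 2 * sqn (y1 - y0)).
    rewrite /h -sqnZ (sqnB _ y1); congr (_ * sqn _).
    by apply/rowP => j; rewrite !mxE; ring.
  by apply: (@upper_slope_poly _ _ _ (c / 2 * sqn (y1 - y0)) 0 0) => t; rewrite !hE; field.
suff : 0 <= a - c * sqn (y1 - y0) by lra.
apply: upper_slope_min_ge0 (upper_slopeD f_slope h_slope) _ => t t01 /=.
by rewrite /h scale0r addr0; apply: y0_min; apply: S_segment.
Qed.

End ProximalStep.

Section QuadraticPath.
Local Open Scope classical_set_scope.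
Variables (R : realType) (n : nat).
Implicit Types (x d : 'rV[R]_n) (a b c g : 'rV[R]_n -> R).

Lemma differentiable_affine a x : affine_fun a -> differentiable a x.
Proof.
case=> w [b aE].
have -> : a = \sum_(j < n) (fun X : 'rV[R]_n => w ord0 j * X ord0 j) + cst b.
  by apply/funext => X; rewrite aE fct_sumE.
apply: differentiableD; last exact: differentiable_cst.
apply: differentiable_sum => j.
have -> : (fun X : 'rV[R]_n => w ord0 j * X ord0 j) = w ord0 j *: (fun X => X ord0 j).
  by apply/funext.
by apply: differentiableZ; exact: differentiable_coord.
Qed.

Lemma differentiable_quad_comp u g x : quad_comp u g -> differentiable g x.
Proof.
case=> -[a [b [c [ha hb hc [] gE]]]] _; have da := differentiable_affine x ha;
  have db := differentiable_affine x hb; have dc := differentiable_affine x hc.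
  have -> : g = a + c * c by apply/funext => X; rewrite gE expr2.
  exact: differentiableD (differentiableM _ _).
have -> : g = c * c - a * b by apply/funext => X; rewrite gE expr2.
exact: differentiableB (differentiableM _ _) (differentiableM _ _).
Qed.

Lemma differentiable_row p (F : 'rV[R]_n -> 'rV[R]_p) x :
  (forall j, differentiable (fun X => F X ord0 j) x) -> differentiable F x.
Proof.
move=> dFj.
have -> : F = \sum_(j < p) (fun X => F X ord0 j *: (delta_mx ord0 j : 'rV[R]_p)).
  apply/funext => X; rewrite fct_sumE; apply/rowP => k.
  rewrite summxE (bigD1 k) //= !mxE eqxx mulr1 big1 ?addr0 // => j jk.
  by rewrite !mxE (eq_sym k j) (negbTE jk) andbF mulr0.
by apply: differentiable_sum => j; apply: differentiableZl.
Qed.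

Lemma diff_quadratic_path p (F : 'rV[R]_n -> 'rV[R]_p) x d L W :
  differentiable F x ->
  (forall t : R, F (x + t *: d) = F x + t *: L + t ^+ 2 *: W) ->
  'd F x d = L.
Proof.
move=> dF FE; rewrite -deriveE //; apply: cvg_lim => //.
have -> : L = L + 0 *: W by rewrite scale0r addr0.
have LW : (fun h : R => L + h *: W) @ 0^' --> L + 0 *: W.
  apply: cvg_within_filter; apply: cvgD; first exact: cvg_cst.
  by apply: cvgZ; [exact: cvg_id | exact: cvg_cst].
apply: cvg_trans LW; apply: near_eq_cvg; near=> h.
have h0 : h != 0 by near: h; exact: nbhs_dnbhs_neq.
rewrite /= /shift [_ + x]addrC FE addrAC (addrAC (F x)) subrr add0r scalerDr.
by rewrite !scalerA mulVf // scale1r expr2 mulrA mulVf // mul1r.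
Unshelve. all: by end_near.
Qed.

Lemma affine_path a x d : affine_fun a ->
  exists al, forall t, a (x + t *: d) = a x + t * al.
Proof. by case=> w [b aE]; exists (dotv w d) => t; rewrite !aE dotvDr dotvZr; ring. Qed.

Lemma quad_comp_path u g x d : quad_comp u g ->
  exists lw : R * R, forall t, g (x + t *: d) = g x + t * lw.1 + t ^+ 2 * lw.2.
Proof.
case=> -[a [b [c [ha hb hc gE]]]] _.
have [al aE] := affine_path x d ha; have [be bE] := affine_path x d hb.
have [ga cE] := affine_path x d hc.
case: gE => gE.
  by exists (al + 2 * c x * ga, ga ^+ 2) => t /=; rewrite !gE aE cE; ring.
exists (2 * c x * ga - a x * be - b x * al, ga ^+ 2 - al * be) => t /=.
by rewrite !gE aE bE cE; ring.
Qed.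

End QuadraticPath.

Section Blocks.
Variables (R : realType) (n M : nat) (blk : 'I_n -> 'I_M).
Implicit Types (v Xn Xo : 'rV[R]_n).

Lemma gs_telescope (f : 'rV[R]_n -> R) Xn Xo :
  \sum_(l < M) (f (gsS blk Xn Xo l) - f (gsI blk Xn Xo l)) = f Xo - f Xn.
Proof.
pose g (m : nat) : 'rV[R]_n := \row_j (if (blk j < m)%N then Xn ord0 j else Xo ord0 j).
have -> : f Xo - f Xn = - f (g M) - - f (g 0%N).
  have -> : g M = Xn by apply/rowP => j; rewrite mxE ltn_ord.
  have -> : g 0%N = Xo by apply/rowP => j; rewrite mxE.
  by rewrite opprK addrC.
rewrite -(@telescope_sumr_eq _ 0 M (fun m => - f (g m)) (fun m => f (g m) - f (g m.+1))) //;
  last by move=> m _; rewrite opprK addrC.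
rewrite big_mkord; apply: eq_bigr => l _.
have -> : gsI blk Xn Xo l = g l.+1 by apply/rowP => j; rewrite !mxE.
by [].
Qed.

Lemma sum_sqn_blockv v : \sum_(l < M) sqn (blockv blk l v) = sqn v.
Proof.
rewrite /sqn /dotv exchange_big /=; apply: eq_bigr => j _.
rewrite (bigD1 (blk j)) //= !mxE eqxx big1 ?addr0 // => l lj.
by rewrite !mxE eq_sym (negbTE lj) mulr0.
Qed.

Lemma gsS_gsI Xn Xo l : gsS blk Xn Xo l = gsI blk Xn Xo l + blockv blk l (Xo - Xn).
Proof.
apply/rowP => j; rewrite !mxE.
case: (ltngtP (blk j) l) => jl.
- by rewrite -val_eqE /= (ltn_eqF jl) addr0.
- by rewrite -val_eqE /= (gtn_eqF jl) addr0.
- by rewrite (val_inj jl) eqxx addrC subrK.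
Qed.

Lemma repl_gsS_segment Xn Xo l (t : R) :
  repl blk l (gsS blk Xn Xo l) (Xn + t *: (Xo - Xn))
  = gsI blk Xn Xo l + t *: blockv blk l (Xo - Xn).
Proof.
apply/rowP => j; rewrite !mxE.
case: (ltngtP (blk j) l) => jl.
- by rewrite -val_eqE /= (ltn_eqF jl) mulr0 addr0.
- by rewrite -val_eqE /= (gtn_eqF jl) mulr0 addr0.
- by rewrite (val_inj jl) eqxx.
Qed.

Lemma l1blkZ l v (s : R) : 0 <= s -> l1blk blk l (s *: v) = s * l1blk blk l v.
Proof.
move=> s_ge0; rewrite /l1blk mulr_sumr; apply: eq_bigr => j _.
by rewrite mxE normrM ger0_norm.
Qed.

Lemma l1blkN l v : l1blk blk l (- v) = l1blk blk l v.
Proof. by apply: eq_bigr => j _; rewrite mxE normrN. Qed.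

Lemma blockvZ l v (s : R) : blockv blk l (s *: v) = s *: blockv blk l v.
Proof. by apply/rowP => j; rewrite !mxE; case: ifP; rewrite ?mulr0. Qed.

Lemma blockvN l v : blockv blk l (- v) = - blockv blk l v.
Proof. by apply/rowP => j; rewrite !mxE; case: ifP; rewrite ?oppr0. Qed.

End Blocks.

Section Lagrangian.
Variables (R : realType) (n N : nat) (P : problem R n N) (rho : 'I_N -> R) (i : 'I_N).
Implicit Types (x z d : 'rV[R]_n) (Yi mui : cfam P i).

Lemma F_quadratic_path u x d : F_admissible P u ->
  exists W, forall t, Ff P i (x + t *: d) = Ff P i x + t *: 'd (Ff P i) x d + t ^+ 2 *: W.
Proof.
move=> F_adm.
have /fin_all_exists [lw lwE] : forall j : 'I_(pdim P i), exists lw : R * R,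
    forall t, Ff P i (x + t *: d) ord0 j = Ff P i x ord0 j + t * lw.1 + t ^+ 2 * lw.2.
  by move=> j; apply: quad_comp_path (F_adm i j).
have FE t : Ff P i (x + t *: d)
    = Ff P i x + t *: (\row_j (lw j).1) + t ^+ 2 *: (\row_j (lw j).2).
  by apply/rowP => j; rewrite !mxE lwE ord1.
have dF : differentiable (Ff P i) x.
  by apply: differentiable_row => j; apply: differentiable_quad_comp (F_adm i j).
by rewrite (diff_quadratic_path dF FE); exists (\row_j (lw j).2).
Qed.

Lemma resid_addr x z c (y e : 'rV[R]_(cdim P i c)) :
  resid P i x z c (y + e) = resid P i x z c y + e.
Proof. by case: c y e => y e /=; rewrite addrA. Qed.

Lemma LagE x z Yi mui : Lag P rho i x z Yi mui =
  dotv (f0 P) x + \sum_(c <- clist) augterm (rho i) (mui c) (resid P i x z c (Yi c)).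
Proof. by rewrite /Lag /augterm big_split /= mulr_sumr addrA. Qed.

(* The derivative of [t |-> resid (x + t d)] at [t = 0]; for [cF] it is the
   differential of [F_i], for the other classes the linear part of the residual. *)
Definition dresid x d c : 'rV[R]_(cdim P i c) :=
  match c as c0 return 'rV[R]_(cdim P i c0) with
  | cpX => d
  | cnX => - d
  | cF => 'd (Ff P i) x d
  | cG => d *m GM P i
  | cpH => d *m HM P i
  | cnH => - (d *m HM P i)
  end.

Lemma resid_quadratic_path u x z d c y : F_admissible P u ->
  exists q, forall t,
    resid P i (x + t *: d) z c y = resid P i x z c y + t *: dresid x d c + t ^+ 2 *: q.
Proof.
move=> F_adm; case: c y => y /=;
  try by exists 0 => t; rewrite ?mulmxDl -?scalemxAl; apply/rowP => j; rewrite !mxE; ring.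
have [W FE] := F_quadratic_path x d F_adm.
by exists W => t; rewrite FE; apply/rowP => j; rewrite !mxE; ring.
Qed.

Lemma resid_affine_increment x z d c y : c <> cF ->
  resid P i (x + d) z c y - resid P i x z c y = dresid x d c.
Proof.
case: c y => y cF_neq //=; first [by case: cF_neq |
  by rewrite ?mulmxDl; apply/rowP => j; rewrite !mxE; ring].
Qed.

Definition dLag x z Yi mui d : R :=
  dotv (f0 P) d
  + \sum_(c <- clist) dotv (mui c + rho i *: resid P i x z c (Yi c)) (dresid x d c).

Lemma Lag_upper_slope u x z Yi mui d : F_admissible P u ->
  upper_slope (fun t => Lag P rho i (x + t *: d) z Yi mui) (dLag x z Yi mui d).
Proof.
move=> F_adm.
have -> : (fun t => Lag P rho i (x + t *: d) z Yi mui) =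
    (fun t => dotv (f0 P) x + t * dotv (f0 P) d) \+
    (fun t => \sum_(c <- clist) augterm (rho i) (mui c) (resid P i (x + t *: d) z c (Yi c))).
  by apply/funext => t; rewrite /= LagE dotvDr dotvZr.
apply: upper_slopeD.
  by apply: (@upper_slope_poly _ _ _ 0 0 0) => t; ring.
apply: upper_slope_sum => c.
have [q qE] := @resid_quadratic_path u x z d c (Yi c) F_adm.
have -> : (fun t => augterm (rho i) (mui c) (resid P i (x + t *: d) z c (Yi c))) =
    (fun t => augterm (rho i) (mui c) (resid P i x z c (Yi c) + t *: dresid x d c + t ^+ 2 *: q)).
  by apply/funext => t; rewrite qE.
exact: augterm_upper_slope.
Qed.

Lemma Lag_increment x z Yi mui d :
  Lag P rho i (x + d) z Yi mui - Lag P rho i x z Yi mui =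
  dLag x z Yi mui d + \sum_(c <- clist)
    (dotv (mui c + rho i *: resid P i x z c (Yi c))
          (resid P i (x + d) z c (Yi c) - resid P i x z c (Yi c) - dresid x d c)
     + rho i / 2 * sqn (resid P i (x + d) z c (Yi c) - resid P i x z c (Yi c))).
Proof.
have termE c : augterm (rho i) (mui c) (resid P i (x + d) z c (Yi c)) =
    augterm (rho i) (mui c) (resid P i x z c (Yi c))
    + (dotv (mui c + rho i *: resid P i x z c (Yi c)) (dresid x d c)
    + (dotv (mui c + rho i *: resid P i x z c (Yi c))
          (resid P i (x + d) z c (Yi c) - resid P i x z c (Yi c) - dresid x d c)
     + rho i / 2 * sqn (resid P i (x + d) z c (Yi c) - resid P i x z c (Yi c)))).
  rewrite -{1}[resid P i (x + d) z c (Yi c)](subrK (resid P i x z c (Yi c))) addrC.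
  by rewrite augtermD dotvBr; ring.
rewrite !LagE /dLag dotvDr (eq_bigr _ (fun c _ => termE c)) !big_split /=; ring.
Qed.

Lemma Lag_increment_explicit x z Yi mui d :
  Lag P rho i (x + d) z Yi mui - Lag P rho i x z Yi mui =
  dLag x z Yi mui d
  + dotv (mui cF + rho i *: (Ff P i x + Yi cF))
         (Ff P i (x + d) - Ff P i x - 'd (Ff P i) x d)
  + rho i / 2 * (sqn (Ff P i (x + d) - Ff P i x) + 2 * sqn d
                 + sqn (d *m GM P i) + 2 * sqn (d *m HM P i)).
Proof.
rewrite Lag_increment /clist !big_cons big_nil.
rewrite (@resid_affine_increment x z d cpX) // (@resid_affine_increment x z d cnX) //.
rewrite (@resid_affine_increment x z d cG) // (@resid_affine_increment x z d cpH) //.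
rewrite (@resid_affine_increment x z d cnH) // !subrr !dotv0r /= !sqnN.
have -> : Ff P i (x + d) + Yi cF - (Ff P i x + Yi cF) = Ff P i (x + d) - Ff P i x.
  by apply/rowP => j; rewrite !mxE; ring.
ring.
Qed.

Lemma Lag_Z_change x z z' Yi mui :
  Lag P rho i x z' Yi mui - Lag P rho i x z Yi mui =
  dotv (mui cpX + rho i *: (x - z + Yi cpX)) (z - z')
  + dotv (mui cnX + rho i *: (z - x + Yi cnX)) (z' - z) + rho i * sqn (z' - z).
Proof.
rewrite !LagE /clist !big_cons !big_nil /=.
have -> : x - z' + Yi cpX = x - z + Yi cpX + (z - z') by apply/rowP => j; rewrite !mxE; ring.
have -> : z' - x + Yi cnX = z - x + Yi cnX + (z' - z) by apply/rowP => j; rewrite !mxE; ring.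
rewrite [augterm _ _ (x - z + _ + _)]augtermD [augterm _ _ (z - x + _ + _)]augtermD.
by rewrite (sqnB z); field.
Qed.

Lemma Lag_multiplier_change x z Yi mui mui' :
  Lag P rho i x z Yi mui - Lag P rho i x z Yi mui' =
  \sum_(c <- clist) dotv (mui c - mui' c) (resid P i x z c (Yi c)).
Proof.
rewrite (eq_bigr _ (fun c _ => dotvBl _ _ _)) sumrB /Lag; ring.
Qed.

End Lagrangian.

Arguments dresid {R n N} P i x d c.
Arguments dLag {R n N} P rho i x z Yi mui d.

Section Descent.
Variables (R : realType) (n N M : nat) (P : problem R n N)
  (u : 'rV[R]_n) (uY : forall i : 'I_N, cfam P i)
  (blk : 'I_n -> 'I_M) (rho : 'I_N -> R)
  (X : nat -> 'I_N -> 'rV[R]_n) (Z : nat -> 'rV[R]_n)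
  (Y : nat -> forall i : 'I_N, cfam P i) (mu : nat -> forall i : 'I_N, cfam P i)
  (sigma1 sigma2 : nat -> 'I_N -> 'I_M -> R) (tau : nat -> R)
  (gamma : nat -> 'I_N -> cls -> R).
Hypothesis F_adm : F_admissible P u.
Hypothesis X0_inbox : forall i, inbox u (X 0%N i).
Hypothesis Z0_inbox : inbox u (Z 0%N).
Hypothesis Y0_inslackbox : forall i c, inslackbox (uY i c) (Y 0%N i c).
Hypothesis X_update : forall k i l, inbox_blk blk u l (X k.+1 i) /\
  forall W, inbox_blk blk u l W ->
    objX blk rho X Z Y mu sigma1 sigma2 k i l (X k.+1 i)
    <= objX blk rho X Z Y mu sigma1 sigma2 k i l W.
Hypothesis Z_update : forall k, inbox u (Z k.+1) /\
  forall W, inbox u W -> objZ rho X Z Y mu tau k (Z k.+1) <= objZ rho X Z Y mu tau k W.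
Hypothesis Y_update : forall k i c, inslackbox (uY i c) (Y k.+1 i c) /\
  forall y, inslackbox (uY i c) y ->
    objY rho X Z Y mu gamma k i c (Y k.+1 i c) <= objY rho X Z Y mu gamma k i c y.

Lemma X_inbox k i : inbox u (X k i).
Proof.
case: k => [|k]; first exact: X0_inbox.
by move=> j; exact: ((X_update k i (blk j)).1 j (eqxx _)).
Qed.

Lemma Z_inbox k : inbox u (Z k).
Proof. by case: k => [|k]; [exact: Z0_inbox | exact: (Z_update k).1]. Qed.

Lemma Y_inslackbox k i c : inslackbox (uY i c) (Y k i c).
Proof. by case: k => [|k]; [exact: Y0_inslackbox | exact: (Y_update k i c).1]. Qed.

Lemma block_first_order k i l :
  sigma1 k i l * l1blk blk l (X k i - X k.+1 i)
  + sigma2 k i l * sqn (blockv blk l (X k.+1 i - X k i))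
  <= dLag P rho i (gsI blk (X k.+1 i) (X k i) l) (Z k) (Y k i) (mu k i)
       (blockv blk l (X k i - X k.+1 i)).
Proof.
set Xn := X k.+1 i; set Xo := X k i; set xI := gsI blk Xn Xo l.
set d := blockv blk l (Xo - Xn).
set L := l1blk blk l (Xn - Xo); set S := sqn (blockv blk l (Xn - Xo)).
pose lag t := Lag P rho i (xI + t *: d) (Z k) (Y k i) (mu k i).
pose prox t := sigma1 k i l * ((1 - t) * L) + sigma2 k i l / 2 * ((1 - t) ^+ 2 * S).
have objE t : 0 <= t <= 1 ->
    objX blk rho X Z Y mu sigma1 sigma2 k i l (Xn + t *: (Xo - Xn)) = lag t + prox t.
  move=> /andP[_ t_le1]; rewrite /objX -/Xn -/Xo repl_gsS_segment -/xI -/d.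
  have -> : Xn + t *: (Xo - Xn) - Xo = (1 - t) *: (Xn - Xo).
    by apply/rowP => j; rewrite !mxE; ring.
  by rewrite l1blkZ ?subr_ge0 // blockvZ sqnZ addrA.
have prox_slope : upper_slope prox (- (sigma1 k i l * L + sigma2 k i l * S)).
  by apply: (@upper_slope_poly _ _ _ (sigma2 k i l / 2 * S) 0 0) => t; rewrite /prox; field.
have lag_slope := Lag_upper_slope rho xI (Z k) (Y k i) (mu k i) d F_adm.
have := upper_slope_min_ge0 (upper_slopeD lag_slope prox_slope).
rewrite -[Xo - Xn]opprB l1blkN -/L subr_ge0; apply=> t /andP[t_gt0 t_le1] /=.
have := objE 0; rewrite scale0r addr0 lexx ler01 => /(_ isT) <-.
rewrite -objE ?(ltW t_gt0) ?t_le1 //; apply: (X_update k i l).2 => j jl; rewrite !mxE.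
apply: segment_in_interval; first exact: (X_update k i l).1.
  exact: X_inbox.
by rewrite (ltW t_gt0) t_le1.
Qed.

Lemma block_descent k i l :
  sigma1 k i l * l1blk blk l (X k i - X k.+1 i) + Uk blk rho X Y mu k i l
  + (sigma2 k i l + rho i) * sqn (blockv blk l (X k.+1 i - X k i))
  + rho i / 2 * (sqn (Ff P i (gsI blk (X k.+1 i) (X k i) l)
                      - Ff P i (gsS blk (X k.+1 i) (X k i) l))
                 + sqn (blockv blk l (X k.+1 i - X k i) *m GM P i)
                 + 2 * sqn (blockv blk l (X k.+1 i - X k i) *m HM P i))
  <= Lag P rho i (gsS blk (X k.+1 i) (X k i) l) (Z k) (Y k i) (mu k i)
     - Lag P rho i (gsI blk (X k.+1 i) (X k i) l) (Z k) (Y k i) (mu k i).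
Proof.
have := block_first_order k i l.
rewrite /Uk /= gsS_gsI Lag_increment_explicit.
set d := blockv blk l (X k i - X k.+1 i).
have -> : blockv blk l (X k.+1 i - X k i) = - d by rewrite /d -blockvN opprB.
rewrite !mulNmx !sqnN (sqnB (Ff P i _)); lra.
Qed.

Lemma X_descent k i :
  \sum_(l < M) sigma2 k i l * sqn (blockv blk l (X k.+1 i - X k i))
  + rho i * sqn (X k.+1 i - X k i)
  + rho i / 2 * \sum_(l < M)
       (sqn (Ff P i (gsI blk (X k.+1 i) (X k i) l) - Ff P i (gsS blk (X k.+1 i) (X k i) l))
        + sqn (blockv blk l (X k.+1 i - X k i) *m GM P i)
        + 2 * sqn (blockv blk l (X k.+1 i - X k i) *m HM P i))
  + \sum_(l < M) (sigma1 k i l * l1blk blk l (X k i - X k.+1 i) + Uk blk rho X Y mu k i l)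
  <= Lag P rho i (X k i) (Z k) (Y k i) (mu k i) - Lag P rho i (X k.+1 i) (Z k) (Y k i) (mu k i).
Proof.
rewrite -(gs_telescope blk (fun x => Lag P rho i x (Z k) (Y k i) (mu k i))).
rewrite -(sum_sqn_blockv blk (X k.+1 i - X k i)) !mulr_sumr -!big_split /=.
by apply: ler_sum => l _; have := block_descent k i l; lra.
Qed.

Lemma Z_first_order k :
  (\sum_(i < N) tau k) * sqn (Z k - Z k.+1) <=
  \sum_(i < N) (dotv (mu k i cpX + rho i *: (X k.+1 i - Z k.+1 + Y k i cpX)) (Z k.+1 - Z k)
               + dotv (mu k i cnX + rho i *: (Z k.+1 - X k.+1 i + Y k i cnX)) (Z k - Z k.+1)).
Proof.
set z0 := Z k.+1; set z1 := Z k.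
pose f W := \sum_(i < N)
  (augterm (rho i) (mu k i cpX) (X k.+1 i - W + Y k i cpX)
   + augterm (rho i) (mu k i cnX) (W - X k.+1 i + Y k i cnX)).
apply: (@prox_first_order _ _ (inbox u) f).
- have -> : (fun t => f (z0 + t *: (z1 - z0))) = (fun t => \sum_(i < N)
      (augterm (rho i) (mu k i cpX) (X k.+1 i - z0 + Y k i cpX + t *: (z0 - z1))
       + augterm (rho i) (mu k i cnX) (z0 - X k.+1 i + Y k i cnX + t *: (z1 - z0)))).
    apply/funext => t; rewrite /f; apply: eq_bigr => i _; f_equal; f_equal;
      by apply/rowP => j; rewrite !mxE; ring.
  apply: upper_slope_sum => i.
  exact: upper_slopeD (augterm_line_upper_slope _ _ _ _) (augterm_line_upper_slope _ _ _ _).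
- move=> t /andP[t_gt0 t_le1] j; rewrite !mxE.
  by apply: segment_in_interval; [exact: Z_inbox | exact: Z_inbox | rewrite (ltW t_gt0) t_le1].
- have objZE W : objZ rho X Z Y mu tau k W = f W + (\sum_(i < N) tau k) / 2 * sqn (W - z1).
    rewrite /objZ /f -/z1 !mulr_suml -big_split /=; apply: eq_bigr => i _; rewrite /augterm; ring.
  by move=> W W_inbox; rewrite -!objZE; exact: (Z_update k).2.
Qed.

Lemma Z_descent k :
  \sum_(i < N) (tau k + rho i) * sqn (Z k.+1 - Z k)
  <= \sum_(i < N) (Lag P rho i (X k.+1 i) (Z k) (Y k i) (mu k i)
                  - Lag P rho i (X k.+1 i) (Z k.+1) (Y k i) (mu k i)).
Proof.
have first_order := Z_first_order k.
rewrite (eq_bigr _ (fun i _ => Lag_Z_change rho _ _ _ _ _)) big_split /=.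
under eq_bigr do rewrite mulrDl.
rewrite big_split /= -mulr_suml (sqnB (Z k.+1)); lra.
Qed.

Lemma Y_class_descent k i c :
  (gamma k i c + rho i / 2) * sqn (Y k.+1 i c - Y k i c)
  <= augterm (rho i) (mu k i c) (resid P i (X k.+1 i) (Z k.+1) c (Y k i c))
     - augterm (rho i) (mu k i c) (resid P i (X k.+1 i) (Z k.+1) c (Y k.+1 i c)).
Proof.
set y0 := Y k.+1 i c; set y1 := Y k i c.
set r := resid P i (X k.+1 i) (Z k.+1) c.
have first_order : gamma k i c * sqn (y1 - y0) <= dotv (mu k i c + rho i *: r y0) (y1 - y0).
  apply: (@prox_first_order _ _ (inslackbox (uY i c)) (fun y => augterm (rho i) (mu k i c) (r y))).
  - under eq_fun do rewrite /r resid_addr.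
    exact: augterm_line_upper_slope.
  - move=> t /andP[t_gt0 t_le1] j; rewrite !mxE.
    apply: segment_in_interval; [exact: Y_inslackbox | exact: Y_inslackbox |].
    by rewrite (ltW t_gt0) t_le1.
  - exact: (Y_update k i c).2.
have -> : r y1 = r y0 + (y1 - y0) by rewrite /r -resid_addr addrC subrK.
rewrite augtermD (sqnB y0); lra.
Qed.

Lemma Y_descent k i :
  \sum_(c <- clist) (gamma k i c + rho i / 2) * sqn (Y k.+1 i c - Y k i c)
  <= Lag P rho i (X k.+1 i) (Z k.+1) (Y k i) (mu k i)
     - Lag P rho i (X k.+1 i) (Z k.+1) (Y k.+1 i) (mu k i).
Proof.
rewrite !LagE opprD addrACA subrr add0r -sumrB.
by apply: ler_sum => c _; exact: Y_class_descent.
Qed.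

Lemma Ltot_descent k :
  Ltot rho X Z Y mu k.+1 + Dk X Z Y mu k + Pk blk rho X Z Y sigma2 tau gamma k
  + \sum_(i < N) \sum_(l < M)
      (sigma1 k i l * l1blk blk l (X k i - X k.+1 i) + Uk blk rho X Y mu k i l)
  <= Ltot rho X Z Y mu k.
Proof.
have Z_step := Z_descent k.
rewrite /Ltot /Dk /Pk -!big_split /=.
apply: (@le_trans _ _ (\sum_(i < N)
   (Lag P rho i (X k i) (Z k) (Y k i) (mu k i)
    - (Lag P rho i (X k.+1 i) (Z k) (Y k i) (mu k i)
       - Lag P rho i (X k.+1 i) (Z k.+1) (Y k i) (mu k i))
    + (tau k + rho i) * sqn (Z k.+1 - Z k)))).
  apply: ler_sum => i _.
  have X_step := X_descent k i; have Y_step := Y_descent k i.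
  have mu_step := Lag_multiplier_change rho (X k.+1 i) (Z k.+1) (Y k.+1 i) (mu k i) (mu k.+1 i).
  lra.
rewrite big_split sumrB /=; lra.
Qed.

End Descent.

Theorem lemma1 (R : realType) (n N M : nat) (P : problem R n N)
  (u : 'rV[R]_n) (uY : forall i : 'I_N, cfam P i)
  (blk : 'I_n -> 'I_M) (rho : 'I_N -> R)
  (X : nat -> 'I_N -> 'rV[R]_n) (Z : nat -> 'rV[R]_n)
  (Y : nat -> forall i : 'I_N, cfam P i) (mu : nat -> forall i : 'I_N, cfam P i)
  (sigma1 sigma2 : nat -> 'I_N -> 'I_M -> R) (tau : nat -> R)
  (gamma : nat -> 'I_N -> cls -> R) :
  (forall j, 0 < u ord0 j) ->
  F_admissible P u ->
  (forall (j1 j2 : 'I_n), (j1 <= j2)%N -> (blk j1 <= blk j2)%N) ->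
  (forall i c j, 0 < uY i c ord0 j) ->
  (forall i, 0 < rho i) ->
  (forall k i l, 0 <= sigma1 k i l) ->
  (forall k i l, 0 < sigma2 k i l) ->
  (forall k, 0 < tau k) ->
  (forall k i c, 0 < gamma k i c) ->
  (forall k i j, 0 <= mu k i cF ord0 j) ->
  (forall i, inbox u (X 0%N i)) ->
  inbox u (Z 0%N) ->
  (forall i c, inslackbox (uY i c) (Y 0%N i c)) ->
  (forall k i l, inbox_blk blk u l (X k.+1 i) /\
     forall W, inbox_blk blk u l W ->
       objX blk rho X Z Y mu sigma1 sigma2 k i l (X k.+1 i)
       <= objX blk rho X Z Y mu sigma1 sigma2 k i l W) ->
  (forall k, inbox u (Z k.+1) /\
     forall W, inbox u W -> objZ rho X Z Y mu tau k (Z k.+1) <= objZ rho X Z Y mu tau k W) ->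
  (forall k i c, inslackbox (uY i c) (Y k.+1 i c) /\
     forall y, inslackbox (uY i c) y ->
       objY rho X Z Y mu gamma k i c (Y k.+1 i c) <= objY rho X Z Y mu gamma k i c y) ->
  forall k : nat,
    Ltot rho X Z Y mu k.+1 + Dk X Z Y mu k + Pk blk rho X Z Y sigma2 tau gamma k
    + \sum_(i < N) \sum_(l < M)
        (sigma1 k i l * l1blk blk l (X k i - X k.+1 i) + Uk blk rho X Y mu k i l)
    <= Ltot rho X Z Y mu k.
Proof.
move=> _ F_adm _ _ _ _ _ _ _ _ X0 Z0 Y0 X_upd Z_upd Y_upd k.
exact: (Ltot_descent F_adm X0 Z0 Y0 X_upd Z_upd Y_upd).
Qed.
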